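(* Let $G$ be a finite simple graph and $u\in V(G)$. Then $A_G(u)=\{1,2,\ldots,\Gamma_G(u)\}$.
   Context: A Grundy-coloring of $G$ is a proper vertex coloring of $G$ with nonempty color classes $C_1,\ldots,C_k$ (vertices of $C_i$ have color $i$) such that for all $i<j$ every vertex of $C_j$ has a neighbor in $C_i$. For $u\in V(G)$, $\Gamma_G(u)$ is the maximum integer $j$ such that there is a Grundy-coloring of $G$ in which $u$ has color $j$, and $A_G(u)$ is the set of all integers $j$ such that there exists a Grundy-coloring of $G$ in which $u$ has color $j$. *)

From mathcomp Require Import all_boot.
Set Implicit Arguments. Unset Strict Implicit. Unset Printing Implicit Defensive.

Definition simple_graph (T : finType) (e : rel T) : Prop :=
  symmetric e /\ irreflexive e.

(* A Grundy-coloring with k colors, given as a map c : T -> nat, where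
   c x = i means x belongs to class C_i; colors are 1..k. *)
Definition grundy_coloring (T : finType) (e : rel T) (k : nat) (c : T -> nat) : bool :=
  [&& [forall x, 1 <= c x <= k],
      [forall i : 'I_k, [exists x, c x == i.+1]],
      [forall x, forall y, e x y ==> (c x != c y)]
    & [forall x, forall i : 'I_k,
         (i.+1 < c x) ==> [exists y, e x y && (c y == i.+1)]]].

(* j \in A_G(u): some Grundy-coloring (with any number k of colors) gives u color j.
   Since color classes are nonempty, k <= #|T|, and colours fit in 'I_(#|T|.+1). *)
Definition in_A (T : finType) (e : rel T) (u : T) (j : nat) : bool :=
  [exists k : 'I_(#|T|.+1), exists c : {ffun T -> 'I_(#|T|.+1)},
     grundy_coloring e k (fun x => nat_of_ord (c x)) && (nat_of_ord (c u) == j)].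

(* Gamma_G(u) = max A_G(u) (0 if A_G(u) were empty). *)
Definition Gamma (T : finType) (e : rel T) (u : T) : nat :=
  \max_(j < #|T|.+1 | in_A e u j) j.

From mathcomp Require Import all_boot zify.

Set Implicit Arguments.
Unset Strict Implicit.
Unset Printing Implicit Defensive.

(* Every Grundy colouring c in which u has colour m yields one in which u has
   any colour 1 <= j <= m: keep the vertices of colour > m - j, shifting their
   colours down by m - j, and move all other vertices to fresh colours above
   every existing one.  The kept vertices still satisfy the Grundy condition,
   since their witnesses are kept too.  Now repeatedly recolour a vertex that
   violates the condition with a colour missing from its neighbourhood below its
   own: this keeps the colouring proper, never touches the kept vertices, and
   decreases the sum of all colours, so it ends with a Grundy colouring. *)

Lemma attained_colors_le_card (T : finType) (d : T -> nat) k :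
  (forall i, 0 < i <= k -> exists x, d x = i) -> k <= #|T|.
Proof.
move=> d_onto; rewrite -(size_iota 1 k) -(size_codom d).
apply: uniq_leq_size (iota_uniq 1 k) _ => i; rewrite mem_iota => ik.
have [x <-] := d_onto i ltac:(lia); exact: codom_f.
Qed.

Section GrundyFunctions.
Variables (T : finType) (e : rel T).

Definition proper_coloring (d : T -> nat) := forall x y, e x y -> d x != d y.

Definition grundy_at (d : T -> nat) x :=
  forall i, 0 < i < d x -> exists2 y, e x y & d y = i.

Definition grundy_fun (d : T -> nat) :=
  [/\ proper_coloring d, forall x, 0 < d x & forall x, grundy_at d x].

Lemma grundy_coloring_grundy_fun k c : grundy_coloring e k c -> grundy_fun c.
Proof.
case/and4P=> /forallP c_range _ /forallP c_proper /forallP c_grundy; split.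
- by move=> x y exy; have /forallP/(_ y) := c_proper x; rewrite exy.
- by move=> x; have /andP[] := c_range x.
move=> x i /andP[i_gt0 i_lt]; have ik : i.-1 < k.
  by have /andP[_ cxk] := c_range x; lia.
have /forallP/(_ (Ordinal ik))/implyP := c_grundy x.
rewrite /= prednK // => /(_ i_lt)/existsP[y /andP[exy /eqP cy]].
by exists y.
Qed.

Lemma eq_grundy_coloring k c1 c2 :
  c1 =1 c2 -> grundy_coloring e k c1 = grundy_coloring e k c2.
Proof.
move=> c12; congr [&& _, _, _ & _].
- by apply: eq_forallb => x; rewrite c12.
- by apply: eq_forallb => i; apply: eq_existsb => x; rewrite c12.
- by apply: eq_forallb => x; apply: eq_forallb => y; rewrite !c12.
apply: eq_forallb => x; apply: eq_forallb => i; rewrite c12.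
by congr (_ ==> _); apply: eq_existsb => y; rewrite c12.
Qed.

Lemma grundy_fun_attained d :
  grundy_fun d -> forall i, 0 < i <= \max_x d x -> exists x, d x = i.
Proof.
case=> _ _ d_grundy i /andP[i_gt0 i_le].
have [x dx] : {x | \max_y d y = d x}.
  apply: eq_bigmax; case: (posnP #|T|) i_le => // /card0_eq T0.
  by rewrite big_pred0 => [|y]; [lia | have := T0 y; rewrite !inE].
rewrite dx leq_eqVlt in i_le.
case/orP: i_le => [/eqP ->|i_lt]; first by exists x.
by have [y _ dy] := d_grundy x i ltac:(lia); exists y.
Qed.

Lemma grundy_fun_grundy_coloring d :
  grundy_fun d -> grundy_coloring e (\max_x d x) d.
Proof.
move=> d_grundy; have d_onto := grundy_fun_attained d_grundy.
case: d_grundy => d_proper d_gt0 d_grundy; apply/and4P; split.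
- by apply/forallP => x; rewrite d_gt0 leq_bigmax.
- apply/forallP => i; have [x dx] := d_onto i.+1 (ltn_ord i).
  by apply/existsP; exists x; rewrite dx.
- by apply/'forall_forallP => x y; apply/implyP; apply: d_proper.
apply/'forall_forallP => x i; apply/implyP => i_lt.
have [y exy dy] := d_grundy x i.+1 i_lt.
by apply/existsP; exists y; rewrite exy dy /=.
Qed.

Lemma grundy_fun_in_A d u : grundy_fun d -> in_A e u (d u).
Proof.
move=> d_grundy; set k := \max_x d x.
have kT : k <= #|T| := attained_colors_le_card (grundy_fun_attained d_grundy).
have dT x : d x < #|T|.+1 by rewrite ltnS (leq_trans (leq_bigmax x)).
apply/existsP; exists (inord k); apply/existsP; exists [ffun x => inord (d x)].
rewrite ffunE !inordK // eqxx andbT (@eq_grundy_coloring k _ d).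
  exact: grundy_fun_grundy_coloring.
by move=> x; rewrite ffunE inordK.
Qed.

Lemma in_A_grundy_fun u j : in_A e u j -> exists2 d, grundy_fun d & d u = j.
Proof.
case/existsP=> k /existsP[c /andP[c_grundy /eqP cu]].
exists (fun x => nat_of_ord (c x)) => //.
exact: grundy_coloring_grundy_fun c_grundy.
Qed.

Lemma in_A_le_Gamma u j : in_A e u j -> j <= Gamma e u.
Proof.
move=> jA; have /existsP[_ /existsP[c /andP[_ /eqP cu]]] := jA.
by rewrite /Gamma -cu; apply: leq_bigmax_cond; rewrite cu.
Qed.

Lemma Gamma_in_A u : 0 < Gamma e u -> in_A e u (Gamma e u).
Proof.
apply: (big_ind (fun m => 0 < m -> in_A e u m)) => // a b aA bA.
by case: (leqP a b).
Qed.

Definition missing_color (d : T -> nat) x i :=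
  (0 < i) && [forall y, e x y ==> (d y != i)].

Definition recolor (d : T -> nat) x i y := if y == x then i else d y.

Lemma sum_recolor d x i : i < d x -> \sum_y recolor d x i y < \sum_y d y.
Proof.
move=> i_lt; rewrite [X in X < _](bigD1 x) // [X in _ < X](bigD1 x) //=.
rewrite {1}/recolor eqxx (eq_bigr d) ?ltn_add2r // => y /negbTE yx.
by rewrite /recolor yx.
Qed.

Hypotheses (e_sym : symmetric e) (e_irr : irreflexive e).

Lemma proper_recolor d x i :
  proper_coloring d -> missing_color d x i -> proper_coloring (recolor d x i).
Proof.
move=> d_proper /andP[_ /forallP i_miss] y z eyz; rewrite /recolor.
have [yx | yx] := eqVneq y x; have [zx | zx] := eqVneq z x.
- by rewrite yx zx e_irr in eyz.
- by rewrite eq_sym; have /implyP := i_miss z; apply; rewrite -yx.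
- by have /implyP := i_miss y; apply; rewrite -zx e_sym.
exact: d_proper.
Qed.

Lemma recolor_to_grundy_fun (S : pred T) d :
  proper_coloring d -> (forall x, 0 < d x) ->
  (forall x, S x -> forall i, 0 < i < d x ->
     exists2 y, S y & e x y /\ d y = i) ->
  exists2 d', grundy_fun d' & forall x, S x -> d' x = d x.
Proof.
have [n] := ubnP (\sum_x d x); elim: n d => // n IH d sum_lt d_proper d_gt0 d_S.
case: (pickP (fun x => has (missing_color d x) (iota 0 (d x)))) => [x|no_missing].
  case/hasP=> i; rewrite mem_iota add0n => i_lt i_miss.
  have /andP[i_gt0 /forallP i_unused] := i_miss.
  have xS : ~~ S x.
    apply/negP => Sx; have [y _ [exy dy]] := d_S x Sx i ltac:(lia).
    by have := i_unused y; rewrite exy dy eqxx.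
  have S_neq_x y : S y -> (y == x) = false.
    by move=> Sy; apply: contraNF xS => /eqP <-.
  have [|||| d' d'_grundy d'E] := IH (recolor d x i).
  - exact: leq_trans (sum_recolor i_lt) sum_lt.
  - exact: proper_recolor.
  - by move=> y; rewrite /recolor; case: eqP.
  - move=> y Sy j; rewrite /recolor S_neq_x // => j_lt.
    by have [z Sz [eyz dz]] := d_S y Sy j j_lt; exists z; rewrite ?S_neq_x.
  by exists d' => // y Sy; rewrite d'E // /recolor S_neq_x.
exists d => //; split => // x i /andP[i_gt0 i_lt].
have /hasPn/(_ i) := negbT (no_missing x).
rewrite mem_iota i_lt /missing_color i_gt0 negb_forall => /(_ isT)/existsP[y].
by rewrite negb_imply negbK => /andP[exy /eqP dy]; exists y.
Qed.

Lemma grundy_fun_shift c s : grundy_fun c ->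
  exists2 d, grundy_fun d & forall x, s < c x -> d x = c x - s.
Proof.
case=> c_proper c_gt0 c_grundy; set k := \max_x c x.
have c_le x : c x <= k := leq_bigmax x.
pose d x := if s < c x then c x - s else c x + k.
have [||| d' d'_grundy d'E] := @recolor_to_grundy_fun (fun x => s < c x) d.
- move=> x y exy; have /eqP := c_proper x y exy.
  have := c_gt0 x; have := c_gt0 y; have := c_le x; have := c_le y; rewrite /d.
  by case: (ltnP s (c x)); case: (ltnP s (c y)) => *; apply/eqP; lia.
- by move=> x; rewrite /d; case: ifP; rewrite ?subn_gt0 ?addn_gt0 ?c_gt0.
- move=> x /= x_kept i; rewrite /d x_kept => i_lt.
  have [y exy cy] := c_grundy x (i + s) ltac:(lia).
  have y_kept : s < c y by lia.
  by exists y => //; rewrite /d y_kept cy addnK.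
by exists d' => // x x_kept; rewrite d'E // /d x_kept.
Qed.

Lemma in_A_downward u m j : in_A e u m -> 0 < j <= m -> in_A e u j.
Proof.
move=> /in_A_grundy_fun[c c_grundy cu] j_range.
have [d d_grundy dE] := grundy_fun_shift (m - j) c_grundy.
have -> : j = d u by rewrite dE cu; lia.
exact: grundy_fun_in_A.
Qed.

End GrundyFunctions.

Theorem proposition1 (T : finType) (e : rel T) (u : T) :
  simple_graph e ->
  forall j : nat, in_A e u j <-> (1 <= j <= Gamma e u).
Proof.
case=> e_sym e_irr j; split=> [jA | /andP[j_gt0 j_le]].
  have [c [_ c_gt0 _] cu] := in_A_grundy_fun jA.
  by rewrite -cu c_gt0 cu in_A_le_Gamma.
apply: (in_A_downward e_sym e_irr (Gamma_in_A _)); lia.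
Qed.
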